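(* Let $(A,B)$ be an imprecise copula and define sequences by $A^0=A$, $B^0=B$ and, for $n\ge0$, $B^{n+1}=(A^n)_M$, $A^{n+1}=(B^{n+1})_O$. Then: (a) $(A^n)$ is pointwise nondecreasing, $(B^n)$ is pointwise nonincreasing, and both converge uniformly on $[0,1]^2$; denote the limits $\breve A$ and $\breve B$. (b) For each $n\ge1$, $(A^n,B^n)$ is an imprecise copula with $A^{n-1}\le A^n\le B^n\le B^{n-1}$. (c) $(\breve A,\breve B)$ is an imprecise copula with $A^n\le\breve A\le\breve B\le B^n$ for all $n$, and $(\breve A)_M=\breve B$, $(\breve B)_O=\breve A$.
   Context: Quasi-copula: $Q:[0,1]^2\to\mathbb{R}$ grounded ($Q(x,0)=Q(0,y)=0$), with neutral element $1$ ($Q(x,1)=x,Q(1,y)=y$), with $V_Q(R)\ge0$ for each rectangle having a side on the boundary of $[0,1]^2$, where $V_Q([s_1,s_2]\times[t_1,t_2])=Q(s_1,t_1)+Q(s_2,t_2)-Q(s_2,t_1)-Q(s_1,t_2)$. Defects: $\mathcal{R}_\nearrow(\mathbf{x}),\mathcal{R}_\swarrow(\mathbf{x}),\mathcal{R}_\nwarrow(\mathbf{x}),\mathcal{R}_\searrow(\mathbf{x})$ are the sets of (possibly degenerate) rectangles in $[0,1]^2$ with $\mathbf{x}$ as southwest, northeast, southeast, northwest corner; $D^Q_\bullet(\mathbf{x})=\inf\{V_Q(R):R\in\mathcal{R}_\bullet(\mathbf{x})\}$; $D^Q_M=\min(D^Q_\nearrow,D^Q_\swarrow)$, $D^Q_O=\min(D^Q_\nwarrow,D^Q_\searrow)$;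 $Q_M=Q-D^Q_M$, $Q_O=Q+D^Q_O$. Imprecise copula: a pair $(A,B)$ of grounded functions with neutral element 1 satisfying, for all rectangles with SW, SE, NE, NW corners $\mathbf{a},\mathbf{b},\mathbf{c},\mathbf{d}$: $A(\mathbf{a})+B(\mathbf{c})-A(\mathbf{b})-A(\mathbf{d})\ge0$, $B(\mathbf{a})+A(\mathbf{c})-A(\mathbf{b})-A(\mathbf{d})\ge0$, $B(\mathbf{a})+B(\mathbf{c})-B(\mathbf{b})-A(\mathbf{d})\ge0$, $B(\mathbf{a})+B(\mathbf{c})-A(\mathbf{b})-B(\mathbf{d})\ge0$. *)

From Stdlib Require Import Reals Lra ClassicalEpsilon.
Open Scope R_scope.

(* Functions on the unit square are modelled as R -> R -> R; only their
   values on [0,1]^2 matter. *)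
Definition fn2 := R -> R -> R.

Definition I01 (x : R) : Prop := 0 <= x <= 1.

Definition V (Q : fn2) (s1 s2 t1 t2 : R) : R :=
  Q s1 t1 + Q s2 t2 - Q s2 t1 - Q s1 t2.

Definition grounded (Q : fn2) : Prop :=
  forall x, I01 x -> Q x 0 = 0 /\ Q 0 x = 0.

Definition neutral1 (Q : fn2) : Prop :=
  forall x, I01 x -> Q x 1 = x /\ Q 1 x = x.

Definition is_glb (E : R -> Prop) (m : R) : Prop :=
  (forall y, E y -> m <= y) /\ (forall b, (forall y, E y -> b <= y) -> b <= m).

(* Infimum (chosen by classical choice; arbitrary (0) if it does not exist). *)
Definition Rinf (E : R -> Prop) : R :=
  epsilon (inhabits 0) (fun m => is_glb E m).

(* (x1,x2) south-west corner *)
Definition D_NE (Q : fn2) (x1 x2 : R) : R :=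
  Rinf (fun v => exists s2 t2, x1 <= s2 <= 1 /\ x2 <= t2 <= 1 /\
                               v = V Q x1 s2 x2 t2).
(* (x1,x2) north-east corner *)
Definition D_SW (Q : fn2) (x1 x2 : R) : R :=
  Rinf (fun v => exists s1 t1, 0 <= s1 <= x1 /\ 0 <= t1 <= x2 /\
                               v = V Q s1 x1 t1 x2).
(* (x1,x2) south-east corner *)
Definition D_NW (Q : fn2) (x1 x2 : R) : R :=
  Rinf (fun v => exists s1 t2, 0 <= s1 <= x1 /\ x2 <= t2 <= 1 /\
                               v = V Q s1 x1 x2 t2).
(* (x1,x2) north-west corner *)
Definition D_SE (Q : fn2) (x1 x2 : R) : R :=
  Rinf (fun v => exists s2 t1, x1 <= s2 <= 1 /\ 0 <= t1 <= x2 /\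
                               v = V Q x1 s2 t1 x2).

Definition D_M (Q : fn2) (x1 x2 : R) : R := Rmin (D_NE Q x1 x2) (D_SW Q x1 x2).
Definition D_O (Q : fn2) (x1 x2 : R) : R := Rmin (D_NW Q x1 x2) (D_SE Q x1 x2).

Definition QM (Q : fn2) : fn2 := fun x y => Q x y - D_M Q x y.
Definition QO (Q : fn2) : fn2 := fun x y => Q x y + D_O Q x y.

Definition imprecise_copula (A B : fn2) : Prop :=
  grounded A /\ grounded B /\ neutral1 A /\ neutral1 B /\
  forall s1 s2 t1 t2, 0 <= s1 -> s1 <= s2 -> s2 <= 1 ->
                      0 <= t1 -> t1 <= t2 -> t2 <= 1 ->
    A s1 t1 + B s2 t2 - A s2 t1 - A s1 t2 >= 0 /\
    B s1 t1 + A s2 t2 - A s2 t1 - A s1 t2 >= 0 /\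
    B s1 t1 + B s2 t2 - B s2 t1 - A s1 t2 >= 0 /\
    B s1 t1 + B s2 t2 - A s2 t1 - B s1 t2 >= 0.

Fixpoint seqAB (A B : fn2) (n : nat) : fn2 * fn2 :=
  match n with
  | O => (A, B)
  | S m => let Bn := QM (fst (seqAB A B m)) in (QO Bn, Bn)
  end.

Definition An (A B : fn2) (n : nat) : fn2 := fst (seqAB A B n).
Definition Bn (A B : fn2) (n : nat) : fn2 := snd (seqAB A B n).

Definition le_sq (F G : fn2) : Prop :=
  forall x y, I01 x -> I01 y -> F x y <= G x y.

Definition eq_sq (F G : fn2) : Prop :=
  forall x y, I01 x -> I01 y -> F x y = G x y.

Definition unif_cv (F : nat -> fn2) (L : fn2) : Prop :=
  forall eps, eps > 0 -> exists N, forall n, (n >= N)%nat ->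
    forall x y, I01 x -> I01 y -> Rabs (F n x y - L x y) < eps.

From Stdlib Require Import Reals Lra Lia ClassicalEpsilon Classical.
Open Scope R_scope.

(* 1. Defects are infima of rectangle volumes; we characterise Q_M (resp. Q_O)
      as the least (resp. greatest) value compatible with the rectangles having
      the given point at the relevant corners.
   2. Corner inequalities: these extremal characterisations show that
      (A, A_M) and (B_O, B) are again imprecise copulas, with A_M <= B and
      A <= B_O.  Iterating gives part (b) and the monotonicity in (a).
   3. Every component is a quasi-copula, hence 1-Lipschitz; a monotone bounded
      sequence of 1-Lipschitz functions converges uniformly to its pointwise
      supremum/infimum (grid argument on the compact square).
   4. The imprecise-copula inequalities are closed under pointwise limits, and
      Q |-> Q_M, Q |-> Q_O are 5-Lipschitz for the sup norm, so the recursions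
      B^{n+1} = (A^n)_M, A^{n+1} = (B^{n+1})_O pass to the limit, giving (c). *)

Lemma Rinf_glb (E : R -> Prop) :
  (exists v, E v) -> (exists b, forall v, E v -> b <= v) -> is_glb E (Rinf E).
Proof.
  intros [v0 Hv0] [b Hb].
  assert (Hbound : bound (fun u => E (- u))).
  { exists (- b). intros u Hu. specialize (Hb _ Hu). lra. }
  assert (Hne : exists u, E (- u)).
  { exists (- v0). rewrite Ropp_involutive. exact Hv0. }
  destruct (completeness _ Hbound Hne) as [m [Hub Hleast]].
  unfold Rinf. apply epsilon_spec. exists (- m). split.
  - intros y Hy. assert (- y <= m) by (apply Hub; rewrite Ropp_involutive; exact Hy).
    lra.
  - intros c Hc. assert (m <= - c); [|lra].
    apply Hleast. intros u Hu. specialize (Hc _ Hu). lra.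
Qed.

Lemma Rinf_le (E : R -> Prop) (b v : R) :
  (forall w, E w -> b <= w) -> E v -> Rinf E <= v.
Proof.
  intros Hb Hv. apply (Rinf_glb E); eauto.
Qed.

Lemma Rinf_ge (E : R -> Prop) (b : R) :
  (exists v, E v) -> (forall w, E w -> b <= w) -> b <= Rinf E.
Proof.
  intros Hne Hb. apply (Rinf_glb E); eauto.
Qed.

Definition valued01 (Q : fn2) : Prop :=
  forall x y, I01 x -> I01 y -> 0 <= Q x y <= 1.

(* Volumes of rectangles inside the square are bounded below, so all four
   defects are genuine infima. *)
Lemma volume_lower_bound (Q : fn2) (a b c d : R) :
  valued01 Q -> I01 a -> I01 b -> I01 c -> I01 d -> -2 <= V Q a b c d.
Proof.
  intros HQ Ha Hb Hc Hd. unfold V.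
  pose proof (HQ a c Ha Hc). pose proof (HQ b d Hb Hd).
  pose proof (HQ b c Hb Hc). pose proof (HQ a d Ha Hd). lra.
Qed.

Ltac side := unfold I01 in *; lra.

(* Characterisation of [QM Q x y = Q x y - min(D_NE, D_SW)]: it dominates
   [Q x y - V] for every rectangle with (x,y) as south-west or north-east
   corner, and it is the least such value. *)
Lemma QM_lower_NE (Q : fn2) (x y s2 t2 : R) :
  valued01 Q -> I01 x -> I01 y -> x <= s2 <= 1 -> y <= t2 <= 1 ->
  Q x y - V Q x s2 y t2 <= QM Q x y.
Proof.
  intros HQ Hx Hy Hs Ht. unfold QM, D_M.
  assert (D_NE Q x y <= V Q x s2 y t2); [|pose proof (Rmin_l (D_NE Q x y) (D_SW Q x y)); lra].
  apply Rinf_le with (-2); [|exists s2, t2; auto].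
  intros w (s & t & Hs' & Ht' & ->). apply volume_lower_bound; auto; side.
Qed.

Lemma QM_lower_SW (Q : fn2) (x y s1 t1 : R) :
  valued01 Q -> I01 x -> I01 y -> 0 <= s1 <= x -> 0 <= t1 <= y ->
  Q x y - V Q s1 x t1 y <= QM Q x y.
Proof.
  intros HQ Hx Hy Hs Ht. unfold QM, D_M.
  assert (D_SW Q x y <= V Q s1 x t1 y); [|pose proof (Rmin_r (D_NE Q x y) (D_SW Q x y)); lra].
  apply Rinf_le with (-2); [|exists s1, t1; auto].
  intros w (s & t & Hs' & Ht' & ->). apply volume_lower_bound; auto; side.
Qed.

Lemma QM_upper (Q : fn2) (x y T : R) :
  I01 x -> I01 y ->
  (forall s2 t2, x <= s2 <= 1 -> y <= t2 <= 1 -> Q x y - V Q x s2 y t2 <= T) ->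
  (forall s1 t1, 0 <= s1 <= x -> 0 <= t1 <= y -> Q x y - V Q s1 x t1 y <= T) ->
  QM Q x y <= T.
Proof.
  intros Hx Hy HNE HSW. unfold QM, D_M.
  assert (Q x y - T <= Rmin (D_NE Q x y) (D_SW Q x y)); [|lra].
  apply Rmin_glb; apply Rinf_ge.
  - exists (V Q x x y y), x, y. repeat split; side.
  - intros w (s & t & Hs & Ht & ->). specialize (HNE s t Hs Ht). lra.
  - exists (V Q x x y y), x, y. repeat split; side.
  - intros w (s & t & Hs & Ht & ->). specialize (HSW s t Hs Ht). lra.
Qed.

(* Dually, [QO Q x y = Q x y + min(D_NW, D_SE)] is the greatest value lying
   below [Q x y + V] for every rectangle with (x,y) as south-east or
   north-west corner. *)
Lemma QO_upper_NW (Q : fn2) (x y s1 t2 : R) :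
  valued01 Q -> I01 x -> I01 y -> 0 <= s1 <= x -> y <= t2 <= 1 ->
  QO Q x y <= Q x y + V Q s1 x y t2.
Proof.
  intros HQ Hx Hy Hs Ht. unfold QO, D_O.
  assert (D_NW Q x y <= V Q s1 x y t2); [|pose proof (Rmin_l (D_NW Q x y) (D_SE Q x y)); lra].
  apply Rinf_le with (-2); [|exists s1, t2; auto].
  intros w (s & t & Hs' & Ht' & ->). apply volume_lower_bound; auto; side.
Qed.

Lemma QO_upper_SE (Q : fn2) (x y s2 t1 : R) :
  valued01 Q -> I01 x -> I01 y -> x <= s2 <= 1 -> 0 <= t1 <= y ->
  QO Q x y <= Q x y + V Q x s2 t1 y.
Proof.
  intros HQ Hx Hy Hs Ht. unfold QO, D_O.
  assert (D_SE Q x y <= V Q x s2 t1 y); [|pose proof (Rmin_r (D_NW Q x y) (D_SE Q x y)); lra].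
  apply Rinf_le with (-2); [|exists s2, t1; auto].
  intros w (s & t & Hs' & Ht' & ->). apply volume_lower_bound; auto; side.
Qed.

Lemma QO_lower (Q : fn2) (x y T : R) :
  I01 x -> I01 y ->
  (forall s1 t2, 0 <= s1 <= x -> y <= t2 <= 1 -> T <= Q x y + V Q s1 x y t2) ->
  (forall s2 t1, x <= s2 <= 1 -> 0 <= t1 <= y -> T <= Q x y + V Q x s2 t1 y) ->
  T <= QO Q x y.
Proof.
  intros Hx Hy HNW HSE. unfold QO, D_O.
  assert (T - Q x y <= Rmin (D_NW Q x y) (D_SE Q x y)); [|lra].
  apply Rmin_glb; apply Rinf_ge.
  - exists (V Q x x y y), x, y. repeat split; side.
  - intros w (s & t & Hs & Ht & ->). specialize (HNW s t Hs Ht). lra.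
  - exists (V Q x x y y), x, y. repeat split; side.
  - intros w (s & t & Hs & Ht & ->). specialize (HSE s t Hs Ht). lra.
Qed.

Ltac bound_NE HQ x y s t :=
  pose proof (QM_lower_NE _ x y s t HQ ltac:(side) ltac:(side) ltac:(side) ltac:(side)).
Ltac bound_SW HQ x y s t :=
  pose proof (QM_lower_SW _ x y s t HQ ltac:(side) ltac:(side) ltac:(side) ltac:(side)).
Ltac bound_NW HQ x y s t :=
  pose proof (QO_upper_NW _ x y s t HQ ltac:(side) ltac:(side) ltac:(side) ltac:(side)).
Ltac bound_SE HQ x y s t :=
  pose proof (QO_upper_SE _ x y s t HQ ltac:(side) ltac:(side) ltac:(side) ltac:(side)).

(* Each lemma is named after the corner where the minimality of
   [QM] (resp. maximality of [QO]) is used; the competing rectangle at that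
   corner is split according to its position relative to the given
   rectangle, and the pieces are controlled by the defects at the two
   neighbouring corners. *)
Section CornerInequalities.
Variable Q : fn2.
Hypothesis HQ : valued01 Q.
Variables s1 s2 t1 t2 : R.
Hypotheses (h1 : 0 <= s1) (h2 : s1 <= s2) (h3 : s2 <= 1)
           (h4 : 0 <= t1) (h5 : t1 <= t2) (h6 : t2 <= 1).

Lemma QM_corners_SE : QM Q s1 t1 + QM Q s2 t2 - QM Q s2 t1 - Q s1 t2 >= 0.
Proof.
  assert (QM Q s2 t1 <= QM Q s1 t1 + QM Q s2 t2 - Q s1 t2); [|lra].
  apply QM_upper; try side.
  - intros u v Hu Hv. destruct (Rle_dec t2 v).
    + bound_NE HQ s1 t1 u t2. bound_NE HQ s2 t2 u v. unfold V in *; lra.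
    + bound_NE HQ s1 t1 u v. bound_SW HQ s2 t2 s1 v. unfold V in *; lra.
  - intros w z Hw Hz. destruct (Rle_dec w s1).
    + bound_SW HQ s1 t1 w z. bound_SW HQ s2 t2 s1 z. unfold V in *; lra.
    + bound_NE HQ s1 t1 w t2. bound_SW HQ s2 t2 w z. unfold V in *; lra.
Qed.

Lemma QM_corners_NW : QM Q s1 t1 + QM Q s2 t2 - Q s2 t1 - QM Q s1 t2 >= 0.
Proof.
  assert (QM Q s1 t2 <= QM Q s1 t1 + QM Q s2 t2 - Q s2 t1); [|lra].
  apply QM_upper; try side.
  - intros u v Hu Hv. destruct (Rle_dec s2 u).
    + bound_NE HQ s1 t1 s2 v. bound_NE HQ s2 t2 u v. unfold V in *; lra.
    + bound_NE HQ s1 t1 u v. bound_SW HQ s2 t2 u t1. unfold V in *; lra.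
  - intros w z Hw Hz. destruct (Rle_dec z t1).
    + bound_SW HQ s1 t1 w z. bound_SW HQ s2 t2 w t1. unfold V in *; lra.
    + bound_NE HQ s1 t1 s2 z. bound_SW HQ s2 t2 w z. unfold V in *; lra.
Qed.

Lemma QO_corners_SW : QO Q s1 t1 + Q s2 t2 - QO Q s2 t1 - QO Q s1 t2 >= 0.
Proof.
  assert (QO Q s2 t1 + QO Q s1 t2 - Q s2 t2 <= QO Q s1 t1); [|lra].
  apply QO_lower; try side.
  - intros w z Hw Hz. destruct (Rle_dec t2 z).
    + bound_NW HQ s1 t2 w z. bound_NW HQ s2 t1 w t2. unfold V in *; lra.
    + bound_NW HQ s2 t1 w z. bound_SE HQ s1 t2 s2 z. unfold V in *; lra.
  - intros u v Hu Hv. destruct (Rle_dec s2 u).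
    + bound_SE HQ s2 t1 u v. bound_SE HQ s1 t2 s2 v. unfold V in *; lra.
    + bound_SE HQ s1 t2 u v. bound_NW HQ s2 t1 u t2. unfold V in *; lra.
Qed.

Lemma QO_corners_NE : Q s1 t1 + QO Q s2 t2 - QO Q s2 t1 - QO Q s1 t2 >= 0.
Proof.
  assert (QO Q s2 t1 + QO Q s1 t2 - Q s1 t1 <= QO Q s2 t2); [|lra].
  apply QO_lower; try side.
  - intros w z Hw Hz. destruct (Rle_dec w s1).
    + bound_NW HQ s1 t2 w z. bound_NW HQ s2 t1 s1 z. unfold V in *; lra.
    + bound_SE HQ s1 t2 w t1. bound_NW HQ s2 t1 w z. unfold V in *; lra.
  - intros u v Hu Hv. destruct (Rle_dec v t1).
    + bound_SE HQ s2 t1 u v. bound_SE HQ s1 t2 u t1. unfold V in *; lra.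
    + bound_NW HQ s2 t1 s1 v. bound_SE HQ s1 t2 u v. unfold V in *; lra.
Qed.

End CornerInequalities.

Definition quasi_copula (Q : fn2) : Prop :=
  grounded Q /\ neutral1 Q /\
  forall s1 s2 t1 t2, 0 <= s1 -> s1 <= s2 -> s2 <= 1 ->
                      0 <= t1 -> t1 <= t2 -> t2 <= 1 ->
    (s1 = 0 \/ s2 = 1 \/ t1 = 0 \/ t2 = 1) -> V Q s1 s2 t1 t2 >= 0.

Ltac boundary H x := let h := fresh in pose proof (H x ltac:(side)) as h; destruct h.

(* The lower bound of an imprecise copula lies below the upper one
   (first inequality on a degenerate rectangle). *)
Lemma ic_le (A B : fn2) : imprecise_copula A B -> le_sq A B.
Proof.
  intros (_ & _ & _ & _ & H) x y Hx Hy.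
  destruct (H x x y y) as (c1 & _); side.
Qed.

Lemma ic_valued (A B : fn2) : imprecise_copula A B -> valued01 A /\ valued01 B.
Proof.
  intros IAB. pose proof (ic_le A B IAB) as LE.
  destruct IAB as (gA & gB & nA & nB & H).
  assert (A0 : forall x y, I01 x -> I01 y -> 0 <= A x y).
  { intros x y Hx Hy. destruct (H 0 x 0 y) as (_ & c2 & _); try side.
    boundary gA x. boundary gA y. boundary gB 0. lra. }
  assert (B1 : forall x y, I01 x -> I01 y -> B x y <= 1).
  { intros x y Hx Hy. destruct (H 0 x y 1) as (_ & _ & c3 & _); try side.
    boundary gB y. boundary nB x. boundary gA 1. side. }
  split; intros x y Hx Hy;
    pose proof (A0 x y Hx Hy); pose proof (B1 x y Hx Hy); pose proof (LE x y Hx Hy); lra.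
Qed.

Lemma ic_quasi (A B : fn2) :
  imprecise_copula A B -> quasi_copula A /\ quasi_copula B.
Proof.
  intros (gA & gB & nA & nB & H). split.
  - split; [exact gA|split; [exact nA|]].
    intros s1 s2 t1 t2 h1 h2 h3 h4 h5 h6 Hb. unfold V.
    destruct (H s1 s2 t1 t2) as (c1 & c2 & c3 & c4); try lra.
    destruct Hb as [ -> | [ -> | [ -> | -> ] ] ].
    + boundary gA t1. boundary gB t1. boundary gA t2. lra.
    + boundary nA t1. boundary nB t2. boundary nA t2. lra.
    + boundary gA s1. boundary gB s1. boundary gA s2. lra.
    + boundary nA s2. boundary nB s2. boundary nA s1. lra.
  - split; [exact gB|split; [exact nB|]].
    intros s1 s2 t1 t2 h1 h2 h3 h4 h5 h6 Hb. unfold V.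
    destruct (H s1 s2 t1 t2) as (c1 & c2 & c3 & c4); try lra.
    destruct Hb as [ -> | [ -> | [ -> | -> ] ] ].
    + boundary gA t2. boundary gB t2. lra.
    + boundary nA t1. boundary nB t1. lra.
    + boundary gA s2. boundary gB s2. lra.
    + boundary nA s1. boundary nB s1. lra.
Qed.

(* On the boundary of the square the defects of a quasi-copula vanish, so the
   corrections [QM] and [QO] do not change boundary values. *)
Lemma QM_boundary (Q : fn2) (x y : R) :
  quasi_copula Q -> valued01 Q -> I01 x -> I01 y ->
  (x = 0 \/ x = 1 \/ y = 0 \/ y = 1) -> QM Q x y = Q x y.
Proof.
  intros (_ & _ & Hq) HQ Hx Hy Hb.
  bound_NE HQ x y x y. unfold V in *.
  assert (QM Q x y <= Q x y); [|lra].
  apply QM_upper; try side.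
  - intros s2 t2 Hs Ht. assert (V Q x s2 y t2 >= 0); [|lra].
    apply Hq; try side; destruct Hb as [ -> | [ -> | [ -> | -> ] ] ]; lra.
  - intros s1 t1 Hs Ht. assert (V Q s1 x t1 y >= 0); [|lra].
    apply Hq; try side; destruct Hb as [ -> | [ -> | [ -> | -> ] ] ]; lra.
Qed.

Lemma QO_boundary (Q : fn2) (x y : R) :
  quasi_copula Q -> valued01 Q -> I01 x -> I01 y ->
  (x = 0 \/ x = 1 \/ y = 0 \/ y = 1) -> QO Q x y = Q x y.
Proof.
  intros (_ & _ & Hq) HQ Hx Hy Hb.
  bound_NW HQ x y x y. unfold V in *.
  assert (Q x y <= QO Q x y); [|lra].
  apply QO_lower; try side.
  - intros s1 t2 Hs Ht. assert (V Q s1 x y t2 >= 0); [|lra].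
    apply Hq; try side; destruct Hb as [ -> | [ -> | [ -> | -> ] ] ]; lra.
  - intros s2 t1 Hs Ht. assert (V Q x s2 t1 y >= 0); [|lra].
    apply Hq; try side; destruct Hb as [ -> | [ -> | [ -> | -> ] ] ]; lra.
Qed.

Lemma QM_grounded_neutral (Q : fn2) :
  quasi_copula Q -> valued01 Q -> grounded (QM Q) /\ neutral1 (QM Q).
Proof.
  intros Hq HQ. pose proof Hq as (g & n & _).
  split; intros x Hx; rewrite !QM_boundary; auto; try side.
Qed.

Lemma QO_grounded_neutral (Q : fn2) :
  quasi_copula Q -> valued01 Q -> grounded (QO Q) /\ neutral1 (QO Q).
Proof.
  intros Hq HQ. pose proof Hq as (g & n & _).
  split; intros x Hx; rewrite !QO_boundary; auto; try side.
Qed.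

Lemma QM_step (A B : fn2) :
  imprecise_copula A B -> imprecise_copula A (QM A) /\ le_sq (QM A) B.
Proof.
  intros IAB. destruct (ic_valued A B IAB) as [vA _].
  destruct (ic_quasi A B IAB) as [qA _].
  destruct (QM_grounded_neutral A qA vA) as [gM nM].
  destruct IAB as (gA & _ & nA & _ & H). split.
  - split; [exact gA|split; [exact gM|split; [exact nA|split; [exact nM|]]]].
    intros s1 s2 t1 t2 h1 h2 h3 h4 h5 h6. split; [|split; [|split]].
    + bound_SW vA s2 t2 s1 t1. unfold V in *; lra.
    + bound_NE vA s1 t1 s2 t2. unfold V in *; lra.
    + apply QM_corners_SE; assumption.
    + apply QM_corners_NW; assumption.
  - intros x y Hx Hy. apply QM_upper; auto.
    + intros s2 t2 Hs Ht. destruct (H x s2 y t2) as (_ & c2 & _); try side. unfold V; lra.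
    + intros s1 t1 Hs Ht. destruct (H s1 x t1 y) as (c1 & _); try side. unfold V; lra.
Qed.

Lemma QO_step (A B : fn2) :
  imprecise_copula A B -> imprecise_copula (QO B) B /\ le_sq A (QO B).
Proof.
  intros IAB. destruct (ic_valued A B IAB) as [_ vB].
  destruct (ic_quasi A B IAB) as [_ qB].
  destruct (QO_grounded_neutral B qB vB) as [gO nO].
  destruct IAB as (_ & gB & _ & nB & H). split.
  - split; [exact gO|split; [exact gB|split; [exact nO|split; [exact nB|]]]].
    intros s1 s2 t1 t2 h1 h2 h3 h4 h5 h6. split; [|split; [|split]].
    + apply QO_corners_SW; assumption.
    + apply QO_corners_NE; assumption.
    + bound_SE vB s1 t2 s2 t1. unfold V in *; lra.
    + bound_NW vB s2 t1 s1 t2. unfold V in *; lra.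
  - intros x y Hx Hy. apply QO_lower; auto.
    + intros s1 t2 Hs Ht. destruct (H s1 x y t2) as (_ & _ & _ & c4); try side. unfold V; lra.
    + intros s2 t1 Hs Ht. destruct (H x s2 t1 y) as (_ & _ & c3 & _); try side. unfold V; lra.
Qed.

Lemma iteration_step (A B : fn2) :
  imprecise_copula A B ->
  imprecise_copula (QO (QM A)) (QM A) /\ le_sq A (QO (QM A)) /\ le_sq (QM A) B.
Proof.
  intros IAB. destruct (QM_step A B IAB) as [IM LM].
  destruct (QO_step A (QM A) IM) as [IO LO]. auto.
Qed.

Lemma iterates_ic (A B : fn2) :
  imprecise_copula A B -> forall n, imprecise_copula (An A B n) (Bn A B n).
Proof.
  intros IAB n. induction n as [|n IH]; [exact IAB|].
  exact (proj1 (iteration_step _ _ IH)).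
Qed.

Definition lipschitz1 (Q : fn2) : Prop :=
  forall x y x' y', I01 x -> I01 y -> I01 x' -> I01 y' ->
    Q x y - Q x' y' <= Rabs (x - x') + Rabs (y - y').

(* A quasi-copula is nondecreasing and 1-Lipschitz in each variable: compare
   with the boundary rectangles on either side of a vertical or horizontal
   strip. *)
Lemma quasi_copula_increments (Q : fn2) (a b t : R) :
  quasi_copula Q -> 0 <= a -> a <= b -> b <= 1 -> 0 <= t <= 1 ->
  (0 <= Q b t - Q a t <= b - a) /\ (0 <= Q t b - Q t a <= b - a).
Proof.
  intros (g & n & H) ha hab hb ht.
  assert (V Q a b 0 t >= 0) by (apply H; lra).
  assert (V Q a b t 1 >= 0) by (apply H; lra).
  assert (V Q 0 t a b >= 0) by (apply H; lra).
  assert (V Q t 1 a b >= 0) by (apply H; lra).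
  unfold V in *. boundary g a. boundary g b. boundary n a. boundary n b.
  boundary g t. boundary n t. lra.
Qed.

Lemma increments_lipschitz (f : R -> R) (a b : R) :
  (forall u v, 0 <= u -> u <= v -> v <= 1 -> 0 <= f v - f u <= v - u) ->
  I01 a -> I01 b -> f a - f b <= Rabs (a - b).
Proof.
  intros Hf Ha Hb. destruct (Rle_dec a b).
  - pose proof (Hf a b ltac:(side) ltac:(side) ltac:(side)).
    pose proof (Rabs_pos (a - b)). lra.
  - pose proof (Hf b a ltac:(side) ltac:(side) ltac:(side)).
    rewrite Rabs_right by lra. lra.
Qed.

Lemma quasi_copula_lipschitz (Q : fn2) : quasi_copula Q -> lipschitz1 Q.
Proof.
  intros Hq x y x' y' Hx Hy Hx' Hy'.
  assert (Q x y - Q x' y <= Rabs (x - x')).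
  { apply (increments_lipschitz (fun u => Q u y)); auto.
    intros u v hu huv hv. apply (quasi_copula_increments Q u v y); auto; side. }
  assert (Q x' y - Q x' y' <= Rabs (y - y')).
  { apply (increments_lipschitz (fun v => Q x' v)); auto.
    intros u v hu huv hv. apply (quasi_copula_increments Q u v x'); auto; side. }
  lra.
Qed.

(* Lipschitz bounds transfer to the opposite function (to pass from
   suprema to infima). *)
Lemma lipschitz_opp (Q : fn2) : lipschitz1 Q -> lipschitz1 (fun x y => - Q x y).
Proof.
  intros HQ x y x' y' Hx Hy Hx' Hy'. pose proof (HQ x' y' x y Hx' Hy' Hx Hy).
  rewrite (Rabs_minus_sym x'), (Rabs_minus_sym y') in *. lra.
Qed.

Lemma eventually_all (m : nat) (P : nat -> nat -> Prop) :
  (forall i, (i <= m)%nat -> exists N, forall n, (n >= N)%nat -> P i n) ->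
  exists N, forall i n, (i <= m)%nat -> (n >= N)%nat -> P i n.
Proof.
  induction m as [|m IH]; intros H.
  - destruct (H 0%nat ltac:(lia)) as [N HN]. exists N. intros i n Hi Hn.
    replace i with 0%nat by lia. auto.
  - destruct IH as [N1 H1]; [intros i Hi; apply H; lia|].
    destruct (H (S m) ltac:(lia)) as [N2 H2].
    exists (Nat.max N1 N2). intros i n Hi Hn.
    destruct (Nat.eq_dec i (S m)) as [->|Hne]; [apply H2|apply H1]; lia.
Qed.

Lemma grid_cover (d x : R) (k : nat) :
  0 <= d -> 0 <= x <= INR k * d ->
  exists i, (i <= k)%nat /\ INR i * d <= x <= INR i * d + d.
Proof.
  intros Hd. induction k as [|k IH]; intros Hx.
  - exists 0%nat. split; [lia|simpl in *; lra].
  - destruct (Rle_dec x (INR k * d)).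
    + destruct IH as (i & Hi & Hix); [lra|]. exists i. split; [lia|exact Hix].
    + exists k. rewrite S_INR, Rmult_plus_distr_r, Rmult_1_l in Hx. split; [lia|lra].
Qed.

Lemma grid_in_square (m i : nat) : (0 < m)%nat -> (i <= m)%nat -> I01 (INR i * / INR m).
Proof.
  intros Hm Hi. assert (Pm : 0 < INR m) by (apply lt_0_INR; lia).
  pose proof (le_INR _ _ Hi). pose proof (pos_INR i).
  pose proof (Rinv_0_lt_compat _ Pm). split.
  - apply Rmult_le_pos; lra.
  - rewrite <- (Rinv_r (INR m)) by lra. apply Rmult_le_compat_r; lra.
Qed.

(* Pointwise convergence of 1-Lipschitz functions to a 1-Lipschitz limit is
   uniform on the (compact) square: control the finitely many points of a
   fine grid and interpolate with the Lipschitz bounds. *)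
Lemma lipschitz_unif_cv (F : nat -> fn2) (L : fn2) :
  (forall n, lipschitz1 (F n)) -> lipschitz1 L ->
  (forall x y, I01 x -> I01 y -> Un_cv (fun n => F n x y) (L x y)) ->
  unif_cv F L.
Proof.
  intros HF HL Hcv eps Heps.
  destruct (archimed_cor1 (eps / 5) ltac:(lra)) as (m & Hm & Hm0).
  assert (Pm : 0 < INR m) by (apply lt_0_INR; lia).
  set (d := / INR m) in *.
  assert (Hd : 0 < d) by (apply Rinv_0_lt_compat; lra).
  assert (Hnet : forall x, I01 x -> exists i, (i <= m)%nat /\ I01 (INR i * d) /\
                   Rabs (x - INR i * d) <= d /\ Rabs (INR i * d - x) <= d).
  { intros x Hx. destruct (grid_cover d x m) as (i & Hi & Hix); [lra| |].
    - unfold d. rewrite Rinv_r by lra. side.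
    - exists i. rewrite (Rabs_minus_sym (INR i * d)).
      split; [exact Hi|split; [apply grid_in_square; auto|]].
      split; apply Rabs_le; lra. }
  destruct (eventually_all m (fun i n => forall j, (j <= m)%nat ->
              Rabs (F n (INR i * d) (INR j * d) - L (INR i * d) (INR j * d)) < eps / 5))
    as [N HN].
  { intros i Hi. destruct (eventually_all m (fun j n =>
        Rabs (F n (INR i * d) (INR j * d) - L (INR i * d) (INR j * d)) < eps / 5))
      as [N HN].
    - intros j Hj. destruct (Hcv (INR i * d) (INR j * d)
        ltac:(apply grid_in_square; auto) ltac:(apply grid_in_square; auto) (eps / 5))
        as [N HN]; [lra|]. exists N. exact HN.
    - exists N. intros n Hn j Hj. auto. }
  exists N. intros n Hn x y Hx Hy.
  destruct (Hnet x Hx) as (i & Hi & Hp & Hxp & Hpx).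
  destruct (Hnet y Hy) as (j & Hj & Hq & Hyq & Hqy).
  specialize (HN i n Hi Hn j Hj). apply Rabs_def2 in HN.
  pose proof (HF n x y _ _ Hx Hy Hp Hq). pose proof (HF n _ _ x y Hp Hq Hx Hy).
  pose proof (HL x y _ _ Hx Hy Hp Hq). pose proof (HL _ _ x y Hp Hq Hx Hy).
  apply Rabs_def1; lra.
Qed.

Definition seq_sup (u : nat -> R) : R := - Rinf (fun v => exists n, v = - u n).

Lemma seq_sup_ub (u : nat -> R) (c : R) :
  (forall n, u n <= c) -> forall n, u n <= seq_sup u.
Proof.
  intros Hc n. unfold seq_sup.
  assert (Rinf (fun v => exists k, v = - u k) <= - u n); [|lra].
  apply Rinf_le with (- c); [|exists n; reflexivity].
  intros w [k ->]. specialize (Hc k). lra.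
Qed.

Lemma seq_sup_least (u : nat -> R) (b : R) :
  (forall n, u n <= b) -> seq_sup u <= b.
Proof.
  intros Hb. unfold seq_sup.
  assert (- b <= Rinf (fun v => exists k, v = - u k)); [|lra].
  apply Rinf_ge; [exists (- u 0%nat), 0%nat; reflexivity|].
  intros w [k ->]. specialize (Hb k). lra.
Qed.

Lemma seq_sup_cv (u : nat -> R) (c : R) :
  Un_growing u -> (forall n, u n <= c) -> Un_cv u (seq_sup u).
Proof.
  intros Hgrow Hc eps Heps.
  destruct (classic (exists N, seq_sup u - eps < u N)) as [[N HN]|Hnone].
  - exists N. intros n Hn. pose proof (growing_prop u n N Hgrow Hn).
    pose proof (seq_sup_ub u c Hc n). unfold Rdist. apply Rabs_def1; lra.
  - exfalso. assert (seq_sup u <= seq_sup u - eps); [|lra].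
    apply seq_sup_least. intros n. apply Rnot_lt_le. intros Hlt. apply Hnone. eauto.
Qed.

Definition lim_up (F : nat -> fn2) : fn2 := fun x y => seq_sup (fun n => F n x y).
Definition lim_down (F : nat -> fn2) : fn2 :=
  fun x y => - lim_up (fun n x' y' => - F n x' y') x y.

Lemma lim_up_spec (F : nat -> fn2) (c : R) :
  (forall n, lipschitz1 (F n)) -> (forall n, le_sq (F n) (F (S n))) ->
  (forall n x y, I01 x -> I01 y -> F n x y <= c) ->
  unif_cv F (lim_up F) /\ (forall n, le_sq (F n) (lim_up F)).
Proof.
  intros HF Hgrow Hc.
  assert (Hub : forall n, le_sq (F n) (lim_up F)).
  { intros n x y Hx Hy. apply (seq_sup_ub (fun k => F k x y) c). intro k. auto. }
  split; [|exact Hub]. apply lipschitz_unif_cv; auto.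
  - intros x y x' y' Hx Hy Hx' Hy'.
    assert (lim_up F x y <= lim_up F x' y' + (Rabs (x - x') + Rabs (y - y'))); [|lra].
    apply seq_sup_least. intro n.
    pose proof (HF n x y x' y' Hx Hy Hx' Hy'). pose proof (Hub n x' y' Hx' Hy'). lra.
  - intros x y Hx Hy. apply (seq_sup_cv (fun k => F k x y) c); [intro n; apply Hgrow; auto|auto].
Qed.

Lemma lim_down_spec (F : nat -> fn2) (c : R) :
  (forall n, lipschitz1 (F n)) -> (forall n, le_sq (F (S n)) (F n)) ->
  (forall n x y, I01 x -> I01 y -> c <= F n x y) ->
  unif_cv F (lim_down F) /\ (forall n, le_sq (lim_down F) (F n)).
Proof.
  intros HF Hdec Hc.
  destruct (lim_up_spec (fun n x y => - F n x y) (- c)) as [U Hub].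
  - intro n. apply lipschitz_opp, HF.
  - intros n x y Hx Hy. specialize (Hdec n x y Hx Hy). simpl. lra.
  - intros n x y Hx Hy. specialize (Hc n x y Hx Hy). lra.
  - split.
    + intros eps Heps. destruct (U eps Heps) as [N HN]. exists N.
      intros n Hn x y Hx Hy. unfold lim_down. rewrite <- Rabs_Ropp.
      replace (- (F n x y - - lim_up (fun k x' y' => - F k x' y') x y))
        with (- F n x y - lim_up (fun k x' y' => - F k x' y') x y) by ring.
      exact (HN n Hn x y Hx Hy).
    + intros n x y Hx Hy. specialize (Hub n x y Hx Hy). simpl in Hub.
      unfold lim_down. lra.
Qed.

Lemma unif_cv_pointwise (F : nat -> fn2) (L : fn2) (x y : R) :
  unif_cv F L -> I01 x -> I01 y -> Un_cv (fun n => F n x y) (L x y).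
Proof.
  intros U Hx Hy eps Heps. destruct (U eps Heps) as [N HN].
  exists N. intros n Hn. apply HN; auto.
Qed.

Lemma unif_cv_shift (F : nat -> fn2) (L : fn2) :
  unif_cv F L -> unif_cv (fun n => F (S n)) L.
Proof.
  intros U eps Heps. destruct (U eps Heps) as [N HN].
  exists N. intros n Hn. apply HN. lia.
Qed.

Lemma cv_const_limit (u : nat -> R) (c l : R) :
  (forall n, u n = c) -> Un_cv u l -> l = c.
Proof.
  intros Hu Hl. apply (UL_sequence u); auto.
  intros eps Heps. exists 0%nat. intros n _. unfold Rdist.
  rewrite Hu, Rminus_diag, Rabs_R0. lra.
Qed.

Lemma cv_nonneg_limit (u : nat -> R) (l : R) :
  Un_cv u l -> (forall n, u n >= 0) -> l >= 0.
Proof.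
  intros Hl Hu. apply Rle_ge, (@Rle_cv_lim (fun _ => 0) u); auto.
  - intro n. apply Rge_le, Hu.
  - intros eps Heps. exists 0%nat. intros n _. unfold Rdist.
    rewrite Rminus_diag, Rabs_R0. lra.
Qed.

Lemma ic_pointwise_limit (F G : nat -> fn2) (L M : fn2) :
  (forall x y, I01 x -> I01 y -> Un_cv (fun n => F n x y) (L x y)) ->
  (forall x y, I01 x -> I01 y -> Un_cv (fun n => G n x y) (M x y)) ->
  (forall n, imprecise_copula (F n) (G n)) -> imprecise_copula L M.
Proof.
  intros HF HG IC.
  assert (I0 : I01 0) by side. assert (I1 : I01 1) by side.
  split; [|split; [|split; [|split]]].
  - intros x Hx. split; eapply cv_const_limit; try (apply HF; auto);
      intro n; destruct (IC n) as (g & _); apply (g x Hx).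
  - intros x Hx. split; eapply cv_const_limit; try (apply HG; auto);
      intro n; destruct (IC n) as (_ & g & _); apply (g x Hx).
  - intros x Hx. split; eapply cv_const_limit; try (apply HF; auto);
      intro n; destruct (IC n) as (_ & _ & nF & _); apply (nF x Hx).
  - intros x Hx. split; eapply cv_const_limit; try (apply HG; auto);
      intro n; destruct (IC n) as (_ & _ & _ & nG & _); apply (nG x Hx).
  - intros s1 s2 t1 t2 h1 h2 h3 h4 h5 h6.
    assert (Is1 : I01 s1) by side. assert (Is2 : I01 s2) by side.
    assert (It1 : I01 t1) by side. assert (It2 : I01 t2) by side.
    split; [|split; [|split]]; (eapply cv_nonneg_limit;
      [repeat apply CV_minus; try apply CV_plus; first [apply HF | apply HG]; auto
      | intro n; destruct (IC n) as (_ & _ & _ & _ & H);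
        destruct (H s1 s2 t1 t2) as (c1 & c2 & c3 & c4); eauto]).
Qed.

(* The corrections are stable under uniform perturbation: moving the function
   by at most e moves [QM] and [QO] by at most 5e (e for the value itself and
   4e for the volumes entering the defects). *)
Lemma QM_perturb (P Q : fn2) (e : R) :
  valued01 Q -> (forall x y, I01 x -> I01 y -> -e <= P x y - Q x y <= e) ->
  forall x y, I01 x -> I01 y -> QM P x y <= QM Q x y + 5 * e.
Proof.
  intros HQ Hd x y Hx Hy.
  pose proof (Hd x y Hx Hy). apply QM_upper; auto.
  - intros s2 t2 Hs Ht. bound_NE HQ x y s2 t2.
    pose proof (Hd s2 t2 ltac:(side) ltac:(side)). pose proof (Hd s2 y ltac:(side) Hy).
    pose proof (Hd x t2 Hx ltac:(side)). unfold V in *. lra.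
  - intros s1 t1 Hs Ht. bound_SW HQ x y s1 t1.
    pose proof (Hd s1 t1 ltac:(side) ltac:(side)). pose proof (Hd s1 y ltac:(side) Hy).
    pose proof (Hd x t1 Hx ltac:(side)). unfold V in *. lra.
Qed.

Lemma QO_perturb (P Q : fn2) (e : R) :
  valued01 Q -> (forall x y, I01 x -> I01 y -> -e <= P x y - Q x y <= e) ->
  forall x y, I01 x -> I01 y -> QO Q x y - 5 * e <= QO P x y.
Proof.
  intros HQ Hd x y Hx Hy.
  pose proof (Hd x y Hx Hy). apply QO_lower; auto.
  - intros s1 t2 Hs Ht. bound_NW HQ x y s1 t2.
    pose proof (Hd s1 t2 ltac:(side) ltac:(side)). pose proof (Hd s1 y ltac:(side) Hy).
    pose proof (Hd x t2 Hx ltac:(side)). unfold V in *. lra.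
  - intros s2 t1 Hs Ht. bound_SE HQ x y s2 t1.
    pose proof (Hd s2 t1 ltac:(side) ltac:(side)). pose proof (Hd s2 y ltac:(side) Hy).
    pose proof (Hd x t1 Hx ltac:(side)). unfold V in *. lra.
Qed.

Lemma QM_unif_limit (F : nat -> fn2) (L : fn2) (x y : R) :
  unif_cv F L -> valued01 L -> (forall n, valued01 (F n)) -> I01 x -> I01 y ->
  Un_cv (fun n => QM (F n) x y) (QM L x y).
Proof.
  intros U vL vF Hx Hy eps Heps.
  destruct (U (eps / 6) ltac:(lra)) as [N HN]. exists N. intros n Hn.
  assert (Hd : forall a b, I01 a -> I01 b -> -(eps / 6) <= F n a b - L a b <= eps / 6).
  { intros a b Ha Hb. specialize (HN n Hn a b Ha Hb). apply Rabs_def2 in HN. lra. }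
  assert (Hd' : forall a b, I01 a -> I01 b -> -(eps / 6) <= L a b - F n a b <= eps / 6).
  { intros a b Ha Hb. specialize (Hd a b Ha Hb). lra. }
  pose proof (QM_perturb (F n) L _ vL Hd x y Hx Hy).
  pose proof (QM_perturb L (F n) _ (vF n) Hd' x y Hx Hy).
  unfold Rdist. apply Rabs_def1; lra.
Qed.

Lemma QO_unif_limit (F : nat -> fn2) (L : fn2) (x y : R) :
  unif_cv F L -> valued01 L -> (forall n, valued01 (F n)) -> I01 x -> I01 y ->
  Un_cv (fun n => QO (F n) x y) (QO L x y).
Proof.
  intros U vL vF Hx Hy eps Heps.
  destruct (U (eps / 6) ltac:(lra)) as [N HN]. exists N. intros n Hn.
  assert (Hd : forall a b, I01 a -> I01 b -> -(eps / 6) <= F n a b - L a b <= eps / 6).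
  { intros a b Ha Hb. specialize (HN n Hn a b Ha Hb). apply Rabs_def2 in HN. lra. }
  assert (Hd' : forall a b, I01 a -> I01 b -> -(eps / 6) <= L a b - F n a b <= eps / 6).
  { intros a b Ha Hb. specialize (Hd a b Ha Hb). lra. }
  pose proof (QO_perturb (F n) L _ vL Hd x y Hx Hy).
  pose proof (QO_perturb L (F n) _ (vF n) Hd' x y Hx Hy).
  unfold Rdist. apply Rabs_def1; lra.
Qed.

Lemma QM_limit_eq (F G : nat -> fn2) (L M : fn2) :
  unif_cv F L -> unif_cv G M -> valued01 L -> (forall n, valued01 (F n)) ->
  (forall n, eq_sq (QM (F n)) (G n)) -> eq_sq (QM L) M.
Proof.
  intros UF UG vL vF Heq x y Hx Hy.
  apply (UL_sequence (fun n => G n x y)).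
  - apply Un_cv_ext with (fun n => QM (F n) x y); [intro n; apply Heq; auto|].
    apply QM_unif_limit; auto.
  - apply unif_cv_pointwise; auto.
Qed.

Lemma QO_limit_eq (G F : nat -> fn2) (M L : fn2) :
  unif_cv G M -> unif_cv F L -> valued01 M -> (forall n, valued01 (G n)) ->
  (forall n, eq_sq (QO (G n)) (F n)) -> eq_sq (QO M) L.
Proof.
  intros UG UF vM vG Heq x y Hx Hy.
  apply (UL_sequence (fun n => F n x y)).
  - apply Un_cv_ext with (fun n => QO (G n) x y); [intro n; apply Heq; auto|].
    apply QO_unif_limit; auto.
  - apply unif_cv_pointwise; auto.
Qed.

Theorem mainTheorem9 (A B : fn2) :
  imprecise_copula A B ->
  (* (a) monotonicity *)
  (forall n, le_sq (An A B n) (An A B (S n))) /\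
  (forall n, le_sq (Bn A B (S n)) (Bn A B n)) /\
  (* (b) *)
  (forall n, (n >= 1)%nat ->
     imprecise_copula (An A B n) (Bn A B n) /\
     le_sq (An A B (n - 1)) (An A B n) /\
     le_sq (An A B n) (Bn A B n) /\
     le_sq (Bn A B n) (Bn A B (n - 1))) /\
  (* (a) uniform convergence, and (c) *)
  exists Ab Bb : fn2,
    unif_cv (An A B) Ab /\ unif_cv (Bn A B) Bb /\
    imprecise_copula Ab Bb /\
    (forall n, le_sq (An A B n) Ab /\ le_sq Ab Bb /\ le_sq Bb (Bn A B n)) /\
    eq_sq (QM Ab) Bb /\ eq_sq (QO Bb) Ab.
Proof.
  intros IAB. pose proof (iterates_ic A B IAB) as IC.
  assert (Hmono : forall n, le_sq (An A B n) (An A B (S n)) /\ le_sq (Bn A B (S n)) (Bn A B n))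
    by (intro n; apply (iteration_step _ _ (IC n))).
  assert (Hval : forall n, valued01 (An A B n) /\ valued01 (Bn A B n))
    by (intro n; apply ic_valued, IC).
  assert (Hlip : forall n, lipschitz1 (An A B n) /\ lipschitz1 (Bn A B n)).
  { intro n. destruct (ic_quasi _ _ (IC n)). split; apply quasi_copula_lipschitz; auto. }
  destruct (lim_up_spec (An A B) 1) as [UA LA];
    [apply Hlip|apply Hmono|intros n x y Hx Hy; apply (proj1 (Hval n)); auto|].
  destruct (lim_down_spec (Bn A B) 0) as [UB LB];
    [apply Hlip|apply Hmono|intros n x y Hx Hy; apply (proj2 (Hval n)); auto|].
  assert (IL : imprecise_copula (lim_up (An A B)) (lim_down (Bn A B))).
  { apply (ic_pointwise_limit (An A B) (Bn A B)); auto; intros; apply unif_cv_pointwise; auto. }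
  destruct (ic_valued _ _ IL) as [vA vB].
  split; [apply Hmono|split; [apply Hmono|split]].
  - intros [|n] Hn; [lia|]. replace (S n - 1)%nat with n by lia.
    split; [apply IC|split; [apply Hmono|split; [apply ic_le, IC|apply Hmono]]].
  - exists (lim_up (An A B)), (lim_down (Bn A B)).
    split; [exact UA|split; [exact UB|split; [exact IL|split; [|split]]]].
    + intro n. split; [apply LA|split; [apply ic_le, IL|apply LB]].
    + apply (QM_limit_eq (An A B) (fun n => Bn A B (S n))); auto using unif_cv_shift.
      * intro n. apply Hval.
      * intros n x y _ _. reflexivity.
    + apply (QO_limit_eq (fun n => Bn A B (S n)) (fun n => An A B (S n)));
        auto using unif_cv_shift.
      * intro n. apply Hval.
      * intros n x y _ _. reflexivity.
Qed.
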